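(* Let $q$ be an even prime power which is a square, and assume that the affine space $AG(3,q)$ contains a translation cap of size $q^{3/2}$. Then for every integer $N>2$ there exists a subset $K$ of the affine space $AG(N,q)$ with $|K|\le q^{N/2}$ such that every point of $AG(N,q)\setminus K$ lies on at least $(q-2)/2$ distinct secants of $K$.
   Context: $AG(N,q)$ denotes the $N$-dimensional affine space over $\mathbb{F}_q$, identified with $\mathbb{F}_q^N$. A cap is a set of points no three of which are collinear. A translation cap in $AG(N,q)$ is a cap $K$ on which some group of translations of $AG(N,q)$ acts regularly (equivalently, $K$ is a coset $x+T$ of an additive subgroup $T$ of $\mathbb{F}_q^N$). A secant of a point set $K$ is a line meeting $K$ in at least two points. *)

From HB Require Import structures.
From mathcomp Require Import all_boot all_order all_algebra all_field.
Set Implicit Arguments. Unset Strict Implicit. Unset Printing Implicit Defensive.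
Import GRing.Theory.
Local Open Scope ring_scope.

(* AG(N,q) is identified with the row space 'rV[F]_N, where F is the field of
   q elements. *)

Definition aline (F : finFieldType) (N : nat) (a d : 'rV[F]_N) : {set 'rV[F]_N} :=
  [set a + t *: d | t : F].

Definition is_line (F : finFieldType) (N : nat) (L : {set 'rV[F]_N}) : bool :=
  [exists a : 'rV[F]_N, exists d : 'rV[F]_N, (d != 0) && (L == aline a d)].

Definition is_cap (F : finFieldType) (N : nat) (K : {set 'rV[F]_N}) : bool :=
  [forall L : {set 'rV[F]_N}, is_line L ==> (#|L :&: K| <= 2)%N].

Definition is_addsubgroup (F : finFieldType) (N : nat) (T : {set 'rV[F]_N}) : bool :=
  (0 \in T) && [forall u in T, forall v in T, u - v \in T].

Definition is_translation_cap (F : finFieldType) (N : nat) (K : {set 'rV[F]_N}) : Prop :=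
  is_cap K /\
  exists (x : 'rV[F]_N) (T : {set 'rV[F]_N}),
    is_addsubgroup T /\ K = [set x + t | t in T].

Definition secants_through (F : finFieldType) (N : nat) (K : {set 'rV[F]_N})
  (x : 'rV[F]_N) : {set {set 'rV[F]_N}} :=
  [set L : {set 'rV[F]_N} | [&& is_line L, x \in L & (2 <= #|L :&: K|)%N]].

From HB Require Import structures.
From mathcomp Require Import all_boot all_order all_algebra all_field.
From mathcomp Require Import ring.

(* Call an additive subgroup T of F^N dilation-free when l T meets T only in 0
   for every scalar l other than 0 and 1; a coset of T is a cap exactly when T
   is dilation-free.  If moreover |T|^2 = q^N, then T + l T = F^N for each such l,
   because (a, b) |-> a + l b is injective on T x T.  So every x outside T is
   a + l b with a, a + b in T, and the line {a + t b} is a secant through x.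
   This line meets T exactly in {a, a + b}, so it comes from at most the two
   parameters l and 1 - l, which leaves at least (q - 2)/2 secants.  Such
   subgroups exist for N = 2 (the parabola {(t, t^2)}, additive in
   characteristic 2) and for N = 3 (the translation cap), and products of them
   are again such subgroups, hence they exist for every N >= 2. *)

Set Implicit Arguments. Unset Strict Implicit. Unset Printing Implicit Defensive.
Import GRing.Theory.

Lemma card_le_double_imset (A B : finType) (f : A -> B) (g : A -> A) (D : {set A}) :
  {in D &, forall a b, f a = f b -> b = a \/ b = g a} -> #|D| <= 2 * #|f @: D|.
Proof.
move=> fibers.
rewrite -sum1_card (partition_big f (mem (f @: D))); last by move=> i iD; apply: imset_f.
rewrite mulnC -sum_nat_const; apply: leq_sum => _ /imsetP[a aD ->].
rewrite sum1dep_card; apply: leq_trans (subset_leq_card (_ : _ \subset [set a; g a])) _.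
  apply/subsetP => b; rewrite !inE => /andP[bD /eqP fab].
  by have [->|->] := fibers a b aD bD (esym fab); rewrite eqxx ?orbT.
by rewrite cards2; case: (_ != _).
Qed.

Lemma finField_char2 (F : finFieldType) : 2 %| #|F| -> (2 \in [pchar F])%R.
Proof.
move=> dvd2F; have [p p_pr pcharFp] := finPcharP F.
suff p2 : p = 2 by move: pcharFp; rewrite p2.
move: dvd2F; rewrite (card_pprimeChar pcharFp) Euclid_dvdX // => /andP[dvd2p _].
by apply/eqP; rewrite eq_sym -dvdn_prime2.
Qed.

Lemma nat_ind23 (P : nat -> Prop) : P 2 -> P 3 ->
  (forall m n, P m -> P n -> P (m + n)) -> forall n, 1 < n -> P n.
Proof.
move=> P2 P3 PD; suff Pk k : P k.+2 /\ P k.+3 by case=> [|[|k]] // _; case: (Pk k).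
by elim: k => [|k [Pk2 Pk3]] //; split=> //; rewrite -addn2; exact: PD Pk2 P2.
Qed.

Local Open Scope ring_scope.

Lemma eqr_scale2r (K : fieldType) (V : lmodType K) (v : V) (a b : K) :
  v != 0 -> (a *: v == b *: v) = (a == b).
Proof.
by move=> v0; rewrite -subr_eq0 -scalerBl scaler_eq0 (negbTE v0) orbF subr_eq0.
Qed.

Section AffineLines.
Context {F : finFieldType} {N : nat}.
Implicit Types (a b d x : 'rV[F]_N) (K T : {set 'rV[F]_N}).

Definition dilation_free T :=
  forall (l : F) u, l != 0 -> l != 1 -> u \in T -> l *: u \in T -> u = 0.

Lemma mem_aline a d (t : F) : a + t *: d \in aline a d.
Proof. by apply/imsetP; exists t. Qed.

Lemma mem_aline0 a d : a \in aline a d.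
Proof. by rewrite -{1}[a]addr0 -(scale0r d) mem_aline. Qed.

Lemma mem_aline1 a d : a + d \in aline a d.
Proof. by rewrite -{1}[d]scale1r mem_aline. Qed.

Lemma aline_is_line a d : d != 0 -> is_line (aline a d).
Proof. by move=> d0; apply/existsP; exists a; apply/existsP; exists d; rewrite d0 eqxx. Qed.

Lemma aline_secant K x a b : a \in K -> a + b \in K -> b != 0 -> x \in aline a b ->
  aline a b \in secants_through K x.
Proof.
move=> aK abK b0 xL; rewrite inE aline_is_line // xL /=.
apply: leq_trans (subset_leq_card (_ : [set a; a + b] \subset _)).
  by rewrite cards2 -{1}[a]addr0 (inj_eq (addrI a)) eq_sym b0.
by apply/subsetP => y; rewrite !inE => /orP[] /eqP ->; rewrite ?mem_aline0 ?mem_aline1.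
Qed.

Lemma doubleton_eq a b a' b' : b' != 0 ->
  [set a; a + b] = [set a'; a' + b'] -> (a' = a /\ b' = b) \/ (a' = a + b /\ b' = - b).
Proof.
move=> b'0 eqS.
have a'S : a' \in [set a; a + b] by rewrite eqS !inE eqxx.
have a'b'S : a' + b' \in [set a; a + b] by rewrite eqS !inE eqxx orbT.
have a'b'_neq : a' + b' != a' by rewrite -{2}[a']addr0 (inj_eq (addrI a')).
move: a'S a'b'S a'b'_neq; rewrite !inE => /orP[] /eqP -> /orP[] /eqP.
- by rewrite -{2}[a]addr0 => /addrI ->; rewrite addr0 eqxx.
- by move=> /addrI ->; left.
- by rewrite -addrA -{2}[a]addr0 => /addrI /eqP; rewrite addrC addr_eq0 => /eqP ->; right.
- by move=> ->; rewrite eqxx.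
Qed.

Lemma cap_translate_dilation_free x T :
  is_cap [set x + t | t in T] -> 0 \in T -> dilation_free T.
Proof.
set C := [set x + t | t in T] => /forallP capC T0 l u l0 l1 uT luT.
apply/eqP; apply: contraT => u0.
have inC t : t \in T -> x + t \in C by move=> tT; apply: imset_f.
have card3 : (2 < #|aline x u :&: C|)%N.
  apply: leq_trans (subset_leq_card (_ : x |: [set x + u; x + l *: u] \subset _)).
    have shift_eq0 v : (x == x + v) = (v == 0).
      by rewrite -{1}[x]addr0 (inj_eq (addrI x)) eq_sym.
    have u_neq_lu : (u == l *: u) = false.
      by rewrite -{1}[u]scale1r eqr_scale2r // eq_sym (negbTE l1).
    rewrite cardsU1 cards2 !inE !shift_eq0 (inj_eq (addrI x)) u_neq_lu.
    by rewrite scaler_eq0 (negbTE u0) (negbTE l0).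
  apply/subsetP => y; rewrite !inE => /orP[/eqP->|/orP[]/eqP->].
  - by rewrite mem_aline0 -{1}[x]addr0 inC.
  - by rewrite mem_aline1 inC.
  - by rewrite mem_aline inC.
by move: (capC (aline x u)); rewrite aline_is_line //= leqNgt card3.
Qed.

End AffineLines.

Section DilationFreeSubgroups.
Variable F : finFieldType.

Lemma is_addsubgroupP N (T : {set 'rV[F]_N}) : reflect (zmod_closed T) (is_addsubgroup T).
Proof.
apply: (iffP andP) => -[T0 TB]; split=> //.
  by move=> u v uT vT; exact: (forall_inP (forall_inP TB u uT) v vT).
by apply/forall_inP => u uT; apply/forall_inP => v vT; exact: TB.
Qed.

Definition sqrt_cap_subgroup N (T : {set 'rV[F]_N}) :=
  [/\ is_addsubgroup T, dilation_free T & (#|T| ^ 2 = #|F| ^ N)%N].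

Section Secants.
Variables (N : nat) (T : {set 'rV[F]_N}).
Hypotheses (T_zmod : zmod_closed T) (T_df : dilation_free T).
Hypothesis T_card : (#|T| ^ 2 = #|F| ^ N)%N.

Let subT : {in T &, forall u v, u - v \in T} := T_zmod.2.

Let addT : {in T &, forall u v, u + v \in T} := (GRing.zmod_closedD T_zmod).2.

Lemma aline_subgroup_param a b (t : F) : a \in T -> b \in T -> b != 0 ->
  a + t *: b \in T -> t = 0 \/ t = 1.
Proof.
move=> aT bT b0 abT.
have tbT : t *: b \in T by rewrite -(addKr a (t *: b)) addrC subT.
have [->|t0] := eqVneq t 0; first by left.
have [->|t1] := eqVneq t 1; first by right.
by rewrite (T_df t0 t1 bT tbT) eqxx in b0.
Qed.

Lemma aline_subgroup_inter a b : a \in T -> b \in T -> b != 0 ->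
  aline a b :&: T = [set a; a + b].
Proof.
move=> aT bT b0; apply/setP => y; rewrite !inE; apply/andP/orP.
  case=> /imsetP[t _ ->] abT.
  have [] := aline_subgroup_param aT bT b0 abT => ->; [left | right];
    by rewrite ?scale0r ?scale1r ?addr0.
by case=> /eqP ->; rewrite ?mem_aline0 ?mem_aline1 ?addT.
Qed.

Lemma secant_param x a b a' b' (l m : F) :
  a \in T -> b \in T -> b != 0 -> a' \in T -> b' \in T -> b' != 0 ->
  x = a + l *: b -> x = a' + m *: b' -> aline a b = aline a' b' ->
  m = l \/ m = 1 - l.
Proof.
move=> aT bT b0 a'T b'T b'0 -> xE /(congr1 (fun L => L :&: T)).
rewrite !aline_subgroup_inter // => /(doubleton_eq b'0)[] [a'E b'E]; move: xE.
  by rewrite a'E b'E => /addrI/eqP; rewrite eqr_scale2r // => /eqP ->; left.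
rewrite a'E b'E scalerN -addrA -{2}[b]scale1r -scalerBl => /addrI/eqP.
by rewrite eqr_scale2r // => /eqP ->; right; rewrite opprB addrC subrK.
Qed.

Lemma subgroup_scale_cover (l : F) : l != 0 -> l != 1 ->
  forall x, exists a b, [/\ a \in T, b \in T & x = a + l *: b].
Proof.
move=> l0 l1 x; pose S := [set p.1 + l *: p.2 | p in setX T T].
have S_inj : {in setX T T &, injective (fun p => p.1 + l *: p.2)}.
  move=> [a b] [a' b'] /setXP[/= aT bT] /setXP[/= a'T b'T] /= eqS.
  have dE : l *: (b - b') = a' - a.
    by rewrite scalerBr; apply/eqP; rewrite subr_eq addrAC -eqS addrAC subrr add0r.
  have lbT : l *: (b - b') \in T by rewrite dE subT.
  have /eqP := T_df l0 l1 (subT bT b'T) lbT.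
  rewrite subr_eq0 => /eqP bE; move: dE; rewrite bE subrr scaler0.
  by move/esym/eqP; rewrite subr_eq0 => /eqP ->.
have : S = setT.
  apply/eqP; rewrite eqEcard subsetT cardsT card_mx mul1n -T_card.
  by rewrite /S card_in_imset // cardsX mulnn leqnn.
by move/setP/(_ x); rewrite inE => /imsetP[[a b] /setXP[/= aT bT] ->]; exists a, b.
Qed.

Lemma secants_through_card x : x \notin T ->
  (#|F| - 2 <= 2 * #|secants_through T x|)%N.
Proof.
move=> xT; pose D := [set l : F | (l != 0) && (l != 1)].
pose rep l := [pick p | [&& p.1 \in T, p.2 \in T & x == p.1 + l *: p.2]].
pose sec l := if rep l is Some p then aline p.1 p.2 else set0.
have repP l : l \in D -> exists a b,
    [/\ a \in T, b \in T, b != 0, x = a + l *: b & sec l = aline a b].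
  rewrite inE => /andP[l0 l1]; rewrite /sec /rep; case: pickP => [[a b]|none].
    move=> /and3P[/= aT bT /eqP xE]; exists a, b; split=> //.
    by apply: contraNneq xT => b0; rewrite xE b0 scaler0 addr0.
  have [a [b [aT bT xE]]] := subgroup_scale_cover l0 l1 x.
  by have := none (a, b); rewrite /= aT bT xE eqxx.
have cardD : #|D| = (#|F| - 2)%N.
  rewrite cardsCs; congr (_ - _)%N.
  have -> : ~: D = [set 0; 1] by apply/setP => l; rewrite !inE negb_and !negbK.
  by rewrite cards2 eq_sym oner_neq0.
rewrite -cardD; apply: leq_trans (card_le_double_imset (f := sec) (g := fun l => 1 - l) _) _.
  move=> l m /repP[a [b [aT bT b0 xE ->]]] /repP[a' [b' [a'T b'T b'0 xE' ->]]].
  exact: secant_param xE xE'.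
rewrite leq_mul2l subset_leq_card ?orbT //; apply/subsetP => _ /imsetP[l lD ->].
have [a [b [aT bT b0 xE ->]]] := repP l lD.
by apply: aline_secant; rewrite ?addT // xE mem_aline.
Qed.

End Secants.

Lemma sqrt_cap_subgroup_row_mx n1 n2 (T1 : {set 'rV[F]_n1}) (T2 : {set 'rV[F]_n2}) :
  sqrt_cap_subgroup T1 -> sqrt_cap_subgroup T2 ->
  sqrt_cap_subgroup [set row_mx p.1 p.2 | p in setX T1 T2].
Proof.
move=> [/is_addsubgroupP [T1_0 T1_B] T1_df T1_card].
move=> [/is_addsubgroupP [T2_0 T2_B] T2_df T2_card].
split.
- apply/is_addsubgroupP; split.
    by apply/imsetP; exists (0, 0); rewrite ?inE /= ?T1_0 ?T2_0 ?row_mx0.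
  move=> _ _ /imsetP[[u1 u2] /setXP[/= u1T u2T] ->] /imsetP[[v1 v2] /setXP[/= v1T v2T] ->].
  rewrite opp_row_mx add_row_mx; apply/imsetP; exists (u1 - v1, u2 - v2) => //.
  by rewrite inE /= T1_B ?T2_B.
- move=> l _ l0 l1 /imsetP[[u1 u2] /setXP[/= u1T u2T] ->].
  rewrite scale_row_mx => /imsetP[[v1 v2] /setXP[/= v1T v2T]] /eq_row_mx[e1 e2].
  by rewrite (T1_df l u1) ?e1 // (T2_df l u2) ?e2 // row_mx0.
- rewrite card_in_imset ?cardsX ?expnMn ?T1_card ?T2_card ?expnD //.
  by move=> [u1 u2] [v1 v2] _ _ /= /eq_row_mx[-> ->].
Qed.

Definition parabola : {set 'rV[F]_2} := [set \row_(i < 2) t ^+ i.+1 | t : F].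

Lemma parabola_sqrt_cap : 2 \in [pchar F] -> sqrt_cap_subgroup parabola.
Proof.
move=> pcharF2; pose f (t : F) : 'rV[F]_2 := \row_(i < 2) t ^+ i.+1.
have f_inj : injective f by move=> s t /rowP/(_ ord0); rewrite !mxE !expr1.
split.
- apply/is_addsubgroupP; split.
    by apply/imsetP; exists 0 => //; apply/rowP => i; rewrite !mxE expr0n.
  move=> _ _ /imsetP[s _ ->] /imsetP[t _ ->]; apply/imsetP; exists (s - t) => //.
  apply/rowP => -[[|[|//]] ?]; rewrite !mxE ?expr1 //.
  by rewrite -!(pFrobenius_autE pcharF2) rmorphB.
- move=> l _ l0 l1 /imsetP[s _ ->] /imsetP[t _ /rowP eq_lst].
  have := eq_lst ord0; have := eq_lst ord_max; rewrite !mxE !expr1 => e2 e1.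
  suff -> : s = 0 by apply/rowP => i; rewrite !mxE expr0n.
  have : l * (l - 1) * s ^+ 2 = 0 by rewrite -[0](subrr (l * s ^+ 2)) {1}e2 -e1; ring.
  by move/eqP; rewrite !mulf_eq0 (negbTE l0) subr_eq0 (negbTE l1) /= orbb => /eqP.
- by rewrite card_imset // cardsT.
Qed.

Lemma translation_cap_sqrt_cap (r : nat) : #|F| = (r ^ 2)%N ->
  (exists C : {set 'rV[F]_3}, is_translation_cap C /\ #|C| = (r ^ 3)%N) ->
  exists T : {set 'rV[F]_3}, sqrt_cap_subgroup T.
Proof.
move=> cardF [C [[capC [x [T [T_sub CE]]]] cardC]]; exists T; split=> //.
  rewrite CE in capC; apply: cap_translate_dilation_free capC _.
  by case/is_addsubgroupP: T_sub.
have -> : #|T| = #|C| by rewrite CE card_imset //; exact: addrI.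
by rewrite cardC cardF -!expnM mulnC.
Qed.

Lemma sqrt_cap_subgroup_exists : 2 \in [pchar F] ->
  (exists T : {set 'rV[F]_3}, sqrt_cap_subgroup T) ->
  forall N, (1 < N)%N -> exists T : {set 'rV[F]_N}, sqrt_cap_subgroup T.
Proof.
move=> pcharF2 sqrt_cap3; apply: nat_ind23 => //.
  by exists parabola; exact: parabola_sqrt_cap.
move=> m n [T1 T1_sqrt] [T2 T2_sqrt].
by eexists; exact: sqrt_cap_subgroup_row_mx T1_sqrt T2_sqrt.
Qed.

End DilationFreeSubgroups.

Unset Implicit Arguments.
Theorem lemma4p2 (F : finFieldType) (r : nat) :
  (2 %| #|F|)%N ->
  #|F| = (r ^ 2)%N ->
  (exists C : {set 'rV[F]_3}, is_translation_cap C /\ #|C| = (r ^ 3)%N) ->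
  forall N : nat, (2 < N)%N ->
  exists K : {set 'rV[F]_N},
    (#|K| ^ 2 <= #|F| ^ N)%N /\
    forall x : 'rV[F]_N, x \notin K ->
      (#|F| - 2 <= 2 * #|secants_through K x|)%N.
Proof.
move=> dvd2F cardF capC N N_gt2.
have [T [T_sub T_df T_card]] := sqrt_cap_subgroup_exists (finField_char2 dvd2F)
  (translation_cap_sqrt_cap cardF capC) (ltnW N_gt2).
exists T; split; first by rewrite T_card.
exact: secants_through_card (is_addsubgroupP _ T_sub) T_df T_card.
Qed.
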